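(* Let $p$ be an odd prime and $\chi$ a primitive Dirichlet character with odd conductor $f$. For every integer $n\ge0$, in $\mathbb Q_p(\chi)$, $$E_{n,\chi}=\lim_{N\to\infty}\sum_{a=1}^{fp^N}(-1)^a\chi(a)a^n .$$
   Context: We set $\chi(a)=0$ if $a$ is not prime to $f$. The generalized Euler numbers are defined by $2\sum_{a=1}^{f}\frac{(-1)^a\chi(a)e^{at}}{e^{ft}+1}=\sum_{n\ge0}E_{n,\chi}\frac{t^n}{n!}$; they lie in $\mathbb Q(\chi)$, viewed inside $\mathbb Q_p(\chi)$, the field generated over $\mathbb Q_p$ by the values of $\chi$. The limit is in the $p$-adic topology. *)

From HB Require Import structures.
From mathcomp Require Import all_boot all_order all_algebra algC algnum.
Set Implicit Arguments. Unset Strict Implicit. Unset Printing Implicit Defensive.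
Import Order.TTheory GRing.Theory Num.Theory.
Local Open Scope ring_scope.

Definition dirichlet_char (f : nat) (chi : nat -> algC) : Prop :=
  [/\ (0 < f)%N,
      chi 1%N = 1,
      (forall a b : nat, chi (a * b)%N = chi a * chi b),
      (forall a : nat, chi (a + f)%N = chi a) &
      (forall a : nat, (chi a == 0) = ~~ coprime a f)].

Definition primitive_char (f : nat) (chi : nat -> algC) : Prop :=
  dirichlet_char f chi /\
  forall d : nat, (d %| f)%N -> (d < f)%N ->
    ~ (forall a : nat, coprime a f -> (a %% d = 1 %% d)%N -> chi a = 1).

Definition expT (c : algC) (n : nat) : {poly algC} :=
  \poly_(k < n.+1) (c ^+ k / (k`!)%:R).

(* E : nat -> algC are the generalized Euler numbers E_{n,chi}:
   (sum_n E_n t^n/n!) * (e^{f t} + 1) = 2 sum_{a=1}^f (-1)^a chi(a) e^{a t}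
   as formal power series, i.e. modulo t^{n+1} for every n. *)
Definition gen_euler (f : nat) (chi : nat -> algC) (E : nat -> algC) : Prop :=
  forall n : nat,
    modp ((\poly_(k < n.+1) (E k / (k`!)%:R)) * (expT f%:R n + 1)) 'X^(n.+1) =
    2%:R *: \sum_(1 <= a < f.+1) (((-1) ^+ a * chi a) *: expT a%:R n).

(* p-adic convergence in Q(chi) (inside algC), simultaneously at all primes
   above p: for every k, eventually (u N - l) / p^k is p-integral, i.e.
   d * (u N - l) / p^k is an algebraic integer for some d prime to p. *)
Definition padic_cvg (p : nat) (u : nat -> algC) (l : algC) : Prop :=
  forall k : nat, exists N0 : nat, forall N : nat, (N0 <= N)%N ->
    exists d : nat, coprime d p /\
      (d%:R * (u N - l) / (p%:R ^+ k)) \in Aint.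

Definition euler_partial (p f : nat) (chi : nat -> algC) (n N : nat) : algC :=
  \sum_(1 <= a < (f * p ^ N).+1) (-1) ^+ a * chi a * (a%:R) ^+ n.

From mathcomp Require Import all_boot all_order all_algebra algC algnum.
From mathcomp Require Import ring.
From mathcomp Require cyclic.
Set Implicit Arguments. Unset Strict Implicit. Unset Printing Implicit Defensive.
Import Order.TTheory GRing.Theory Num.Theory.
Local Open Scope ring_scope.

(* Write M = K f with K odd (K = p^N in the theorem).  Since f and K are odd,
   sum_(a <= M) (-1)^a chi(a) e^(a t) = G(t) * sum_(j < K) (-1)^j e^(j f t),
   where 2 G(t) = E(t) (e^(f t) + 1), and
   (e^(f t) + 1) sum_(j < K) (-1)^j e^(j f t) telescopes to 1 + e^(M t).  Comparing coefficients of t^n gives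
   2 S_M = E_n + sum_(i <= n) C(n, i) E_i M^(n - i),
   where S_M is the partial sum.  The case K = 1 shows by induction that
   2^(n+1) E_n is an algebraic integer, so 2^(n+1) (S_M - E_n) is M times an
   algebraic integer, and p^N divides M. *)

Lemma natr_fact_neq0 (R : numDomainType) k : (k`!)%:R != 0 :> R.
Proof. by rewrite pnatr_eq0 -lt0n fact_gt0. Qed.

Lemma natr_bin_fact (R : numFieldType) k i : (i <= k)%N ->
  'C(k, i)%:R = (k`!)%:R / ((i`!)%:R * ((k - i)`!)%:R) :> R.
Proof.
move=> le_ik; rewrite -(bin_fact le_ik) !natrM mulfK //.
by rewrite mulf_neq0 // natr_fact_neq0.
Qed.

Lemma modp_sum (R : fieldType) (I : Type) (r : seq I) (P : pred I)
    (F : I -> {poly R}) (d : {poly R}) :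
  modp (\sum_(i <- r | P i) F i) d = \sum_(i <- r | P i) modp (F i) d.
Proof.
by apply: (big_morph (fun p => modp p d)) => [p q|]; rewrite ?modpD ?mod0p.
Qed.

Lemma coef_modXn (R : fieldType) (p : {poly R}) n k :
  (modp p 'X^n)`_k = if (k < n)%N then p`_k else 0.
Proof. by rewrite -Pdiv.IdomainMonic.take_poly_modp coef_take_poly. Qed.

Lemma coef_expT c n k :
  (expT c n)`_k = if (k < n.+1)%N then c ^+ k / (k`!)%:R else 0.
Proof. exact: coef_poly. Qed.

Lemma expT0 n : expT 0 n = 1.
Proof.
apply/polyP => -[|k]; rewrite coef_expT coef1 /= ?expr0 ?divr1 //.
by rewrite expr0n mul0r if_same.
Qed.

Lemma modXn_expT_mul c d n :
  modp (expT c n * expT d n) 'X^(n.+1) = expT (c + d) n.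
Proof.
apply/polyP => k; rewrite coef_modXn coef_expT.
case: ifP => // lt_kn; rewrite coefM addrC exprDn mulr_suml.
apply: eq_bigr => i _; have le_ik : (i <= k)%N by rewrite -ltnS.
rewrite !coef_expT (leq_ltn_trans le_ik lt_kn).
rewrite (leq_ltn_trans (leq_subr i k) lt_kn) -[_ *+ 'C(k, i)]mulr_natr.
rewrite natr_bin_fact //.
by field; rewrite !natr_fact_neq0.
Qed.

Definition egf (E : nat -> algC) (n : nat) : {poly algC} :=
  \poly_(k < n.+1) (E k / (k`!)%:R).

Lemma coef_egf_fact E n m : (m <= n)%N -> (egf E n)`_m * (m`!)%:R = E m.
Proof. by move=> le_mn; rewrite coef_poly ltnS le_mn divfK ?natr_fact_neq0. Qed.

Lemma coef_egf_expT_fact E n c m : (m <= n)%N ->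
  (modp (egf E n * expT c n) 'X^(n.+1))`_m * (m`!)%:R
    = \sum_(i < m.+1) 'C(m, i)%:R * E i * c ^+ (m - i).
Proof.
move=> le_mn; rewrite coef_modXn ltnS le_mn coefM mulr_suml.
apply: eq_bigr => i _; have le_im : (i <= m)%N by rewrite -ltnS.
rewrite coef_poly coef_expT !ltnS (leq_trans le_im le_mn).
rewrite (leq_trans (leq_subr i m) le_mn) natr_bin_fact //.
by field; rewrite !natr_fact_neq0.
Qed.

Definition alt_char_exp (chi : nat -> algC) (n M : nat) : {poly algC} :=
  \sum_(1 <= a < M.+1) ((-1) ^+ a * chi a) *: expT a%:R n.

Definition alt_char_sum (chi : nat -> algC) (n M : nat) : algC :=
  \sum_(1 <= a < M.+1) (-1) ^+ a * chi a * a%:R ^+ n.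

Lemma coef_alt_char_exp_fact chi n M :
  (alt_char_exp chi n M)`_n * (n`!)%:R = alt_char_sum chi n M.
Proof.
rewrite coef_sum mulr_suml; apply: eq_bigr => a _.
by rewrite coefZ coef_expT ltnS leqnn -mulrA divfK ?natr_fact_neq0.
Qed.

Lemma periodic_addMn (T : Type) (g : nat -> T) f :
  (forall a, g (a + f)%N = g a) -> forall b j, g (b + j * f)%N = g b.
Proof.
by move=> g_periodic b; elim=> [|j IH]; rewrite ?addn0 // mulSnr addnA g_periodic.
Qed.

Lemma big_nat_blocks (V : nmodType) (F : nat -> V) f K :
  \sum_(1 <= a < (K * f).+1) F a
    = \sum_(0 <= j < K) \sum_(1 <= b < f.+1) F (b + j * f)%N.
Proof.
elim: K => [|K IH]; first by rewrite mul0n !big_geq.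
rewrite [in RHS]big_nat_recr //= -IH mulSnr.
rewrite (@big_cat_nat _ _ _ (K * f).+1) //=; last by rewrite ltnS leq_addr.
congr (_ + _).
by rewrite -{1}(add1n (K * f)) big_addn -addnS addKn.
Qed.

Lemma modXn_expT_alt_telescope f n K : odd K ->
  modp ((expT f%:R n + 1) * \sum_(0 <= j < K) (-1) ^+ j *: expT (j * f)%:R n)
       'X^(n.+1) = 1 + expT (K * f)%:R n.
Proof.
move=> oddK; rewrite -(expT0 n) mulr_sumr modp_sum.
rewrite (telescope_sumr_eq (fun j => - ((-1) ^+ j *: expT (j * f)%:R n))) //.
  by rewrite -signr_odd oddK mul0n expr0 expr1 scaleN1r scale1r !opprK addrC.
move=> j _; rewrite -scalerAr modpZl mulrDl modpD !modXn_expT_mul add0r.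
by rewrite -natrD -mulSn exprS mulN1r scaleNr !opprK scalerDr.
Qed.

Lemma modXn_alt_char_exp_periods chi f n K :
  odd f -> (forall a, chi (a + f)%N = chi a) ->
  modp (alt_char_exp chi n f * \sum_(0 <= j < K) (-1) ^+ j *: expT (j * f)%:R n)
       'X^(n.+1) = alt_char_exp chi n (K * f).
Proof.
move=> oddf chi_periodic.
have sign_Mf j : (-1) ^+ (j * f) = (-1) ^+ j :> algC.
  by rewrite mulnC exprM -signr_odd oddf expr1.
rewrite /alt_char_exp big_nat_blocks mulr_suml modp_sum exchange_big /=.
apply: eq_bigr => j _; rewrite mulr_sumr modp_sum; apply: eq_bigr => b _.
rewrite -scalerAl -scalerAr !modpZl modXn_expT_mul -natrD scalerA.
by rewrite (periodic_addMn chi_periodic) exprD sign_Mf mulrAC.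
Qed.

Lemma coef_egf_1DexpT_fact E n c :
  (modp (egf E n * (1 + expT c n)) 'X^(n.+1))`_n * (n`!)%:R
    = E n + \sum_(i < n.+1) 'C(n, i)%:R * E i * c ^+ (n - i).
Proof.
rewrite mulrDr modpD coefD mulrDl mulr1 coef_egf_expT_fact //.
by rewrite coef_modXn ltnS leqnn coef_egf_fact.
Qed.

Lemma gen_euler_alt_char_sum f chi E n :
  gen_euler f chi E ->
  2%:R * alt_char_sum chi n f
    = E n + \sum_(i < n.+1) 'C(n, i)%:R * E i * f%:R ^+ (n - i).
Proof.
move=> hE; rewrite -coef_alt_char_exp_fact mulrA -coefZ -(hE n) addrC.
exact: coef_egf_1DexpT_fact.
Qed.

Lemma gen_euler_alt_char_sum_periods f chi E n K :
  odd f -> odd K -> (forall a, chi (a + f)%N = chi a) -> gen_euler f chi E ->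
  2%:R * alt_char_sum chi n (K * f)
    = E n + \sum_(i < n.+1) 'C(n, i)%:R * E i * (K * f)%:R ^+ (n - i).
Proof.
move=> oddf oddK chi_periodic hE.
have egf_id : 2%:R *: alt_char_exp chi n (K * f)
    = modp (egf E n * (1 + expT (K * f)%:R n)) 'X^(n.+1).
  rewrite -(modXn_alt_char_exp_periods n K oddf chi_periodic).
  rewrite -modpZl scalerAl -[2%:R *: _](hE n) mulrC modp_mul mulrCA.
  by rewrite [_ * (expT _ _ + 1)]mulrC -modp_mul modXn_expT_alt_telescope.
by rewrite -coef_alt_char_exp_fact mulrA -coefZ egf_id coef_egf_1DexpT_fact.
Qed.

Lemma dirichlet_char_Aint f chi a : dirichlet_char f chi -> chi a \in Aint.
Proof.
case=> f_gt0 chi1 chiM chi_periodic chi_eq0.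
have chi_modn b : chi b = chi (b %% f)%N.
  by rewrite {1}(divn_eq b f) addnC periodic_addMn.
have [coprime_af | not_coprime] := boolP (coprime a f); last first.
  by move: not_coprime; rewrite -chi_eq0 => /eqP ->; apply: rpred0.
have chiX k : chi (a ^ k)%N = chi a ^+ k.
  by elim: k => [|k IH]; rewrite ?expn0 ?expr0 // expnS exprS chiM IH.
apply: (@Aint_unity_root (totient f)); first by rewrite totient_gt0.
by rewrite unity_rootE -chiX chi_modn cyclic.Euler_exp_totient // -chi_modn chi1.
Qed.

Lemma alt_char_sum_Aint f chi n M :
  dirichlet_char f chi -> alt_char_sum chi n M \in Aint.
Proof.
move=> hchi; apply: rpred_sum => a _.
by rewrite !rpredM ?rpredX ?rpredN ?rpred1 ?rpred_nat
  ?(dirichlet_char_Aint a hchi).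
Qed.

Lemma exp2_binomial_sum (R : comNzRingType) (E : nat -> R) (x : R) m :
  2%:R ^+ m * \sum_(i < m) 'C(m, i)%:R * E i * x ^+ (m - i)
    = \sum_(i < m) 'C(m, i)%:R * 2%:R ^+ (m - i.+1) * (2%:R ^+ i.+1 * E i)
                   * x ^+ (m - i).
Proof.
rewrite mulr_sumr; apply: eq_bigr => i _.
by rewrite -[m in 2%:R ^+ m](subnK (ltn_ord i)) exprD; ring.
Qed.

Lemma euler_exp2_Aint f chi E m :
  dirichlet_char f chi -> gen_euler f chi E -> 2%:R ^+ m.+1 * E m \in Aint.
Proof.
move=> hchi hE; elim/ltn_ind: m => m IH.
have := gen_euler_alt_char_sum m hE.
rewrite big_ord_recr /= binn subnn expr0 mulr1 mul1r => sum_id.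
have -> : 2%:R ^+ m.+1 * E m = 2%:R ^+ m * (2%:R * alt_char_sum chi m f)
    - 2%:R ^+ m * \sum_(i < m) 'C(m, i)%:R * E i * f%:R ^+ (m - i).
  by rewrite sum_id exprSr; ring.
rewrite exp2_binomial_sum rpredB ?rpredM ?rpredX ?rpred_nat //.
  exact: alt_char_sum_Aint hchi.
apply: rpred_sum => i _.
by rewrite rpredM ?rpredX ?rpred_nat // rpredM ?IH // rpredM ?rpredX ?rpred_nat.
Qed.

Lemma natr_expS_div_Aint d M k :
  (d %| M)%N -> (M%:R ^+ k.+1 / d%:R : algC) \in Aint.
Proof.
case/dvdnP=> q ->; have [-> | d_neq0] := eqVneq d 0.
  by rewrite invr0 mulr0 rpred0.
rewrite exprS natrM mulrAC mulfK ?pnatr_eq0 //.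
by rewrite rpredM ?rpredX ?rpredM ?rpred_nat.
Qed.

Lemma alt_char_sum_sub_euler_Aint f chi E n K d :
  odd f -> odd K -> dirichlet_char f chi -> gen_euler f chi E ->
  (d %| K * f)%N ->
  (2 ^ n.+1)%:R * (alt_char_sum chi n (K * f) - E n) / d%:R \in Aint.
Proof.
move=> oddf oddK hchi hE dvd_d.
have chi_periodic : forall a, chi (a + f)%N = chi a by case: hchi.
have := gen_euler_alt_char_sum_periods n oddf oddK chi_periodic hE.
rewrite big_ord_recr /= binn subnn expr0 mulr1 mul1r => sum_id.
have -> : (2 ^ n.+1)%:R * (alt_char_sum chi n (K * f) - E n)
    = 2%:R ^+ n * \sum_(i < n) 'C(n, i)%:R * E i * (K * f)%:R ^+ (n - i).
  by rewrite natrX exprSr -mulrA mulrBr sum_id; ring.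
rewrite exp2_binomial_sum mulr_suml; apply: rpred_sum => i _.
rewrite -(subnSK (ltn_ord i)) -[_ / d%:R]mulrA rpredM ?natr_expS_div_Aint //.
by rewrite rpredM ?(euler_exp2_Aint _ hchi hE) // rpredM ?rpredX ?rpred_nat.
Qed.

Theorem lemma2p1 (p f : nat) (chi : nat -> algC) (E : nat -> algC) :
  prime p -> odd p -> odd f -> primitive_char f chi -> gen_euler f chi E ->
  forall n : nat, padic_cvg p (euler_partial p f chi n) (E n).
Proof.
move=> _ oddp oddf [hchi _] hE n k.
exists k => N le_kN; exists (2 ^ n.+1)%N; split.
  by rewrite coprimeXl // coprime2n.
have -> : euler_partial p f chi n N = alt_char_sum chi n (p ^ N * f).
  by rewrite mulnC.
rewrite -natrX; apply: alt_char_sum_sub_euler_Aint => //.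
  by rewrite oddX oddp orbT.
by rewrite dvdn_mulr // dvdn_exp2l.
Qed.
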